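(* Let $g(z)=z^3-z^2+7z+1$, $A=\{z\in\mathbb{C}:\Re z\le0,\ |g(z)|=1\}$ and $B=\{z\in\mathbb{C}:\Re z>0,\ |g(z)|=1\}$. Then $A\subset D(0,0.275)$ and $B\subset D(0,2.75)$, where $D(0,r)$ is the open disc of radius $r$ centered at $0$. *)

From Stdlib Require Import Reals.
From Coquelicot Require Export Coquelicot.
Open Scope R_scope.
Open Scope C_scope.

Definition g (z : C) : C := z * z * z - z * z + RtoC 7 * z + RtoC 1.

Definition Disc0 (r : R) : C -> Prop := fun z => (Cmod z < r)%R.

Definition setA : C -> Prop := fun z => (Re z <= 0)%R /\ Cmod (g z) = 1%R.
Definition setB : C -> Prop := fun z => (0 < Re z)%R /\ Cmod (g z) = 1%R.

(** With [x = Re z] and [s = |z|^2], [|g z|^2 - 1] is a polynomial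
    [g_excess x s], so it suffices to show [g_excess x s > 0] outside the discs.
    In the left half-plane, on a circle of radius [r <= 1/2] the minimum is at
    the real point [z = -r], where [g_excess = r (r^2 + r + 7) (r^3 + r^2 + 7 r - 2)]
    is positive once [r^3 + r^2 + 7 r > 2], i.e. beyond [r = 0.2747...]; larger
    circles need only crude bounds.  In the right half-plane [g_excess x] is
    increasing in [s] for [s >= (11/4)^2], and on the circle [s = (11/4)^2] it is
    a cubic in [x] that stays positive for [x >= 0]. *)

From Stdlib Require Import Reals Lra Psatz.
From Coquelicot Require Import Coquelicot.

Definition g_excess (x s : R) : R :=
  s ^ 3 - (13 + 2 * x) * s ^ 2 + (51 - 20 * x + 28 * x ^ 2) * s
  + (8 * x ^ 3 - 4 * x ^ 2 + 14 * x).

Lemma Cmod_g_sqr (z : C) : Cmod (g z) ^ 2 = 1 + g_excess (Re z) (Cmod z ^ 2).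
Proof.
  rewrite !Cmod2_alt; destruct z as [x y].
  unfold g, g_excess, Cminus, Cmult, Cplus, Copp, RtoC; simpl; ring.
Qed.

Lemma g_excess_neg_real (r : R) :
  g_excess (- r) (r ^ 2) = r * (r ^ 2 + r + 7) * (r ^ 3 + r ^ 2 + 7 * r - 2).
Proof. unfold g_excess; ring. Qed.

Lemma g_excess_min_neg_real (x r : R) :
  - r <= x <= 0 -> r <= 1 / 2 -> g_excess (- r) (r ^ 2) <= g_excess x (r ^ 2).
Proof.
  intros [Hrx Hx0] Hr.
  set (s := r ^ 2).
  assert (Hs : 0 <= s <= 1 / 4) by (unfold s; nra).
  assert (E : g_excess x s - g_excess (- r) s =
              (x + r) * (8 * (x ^ 2 - x * r + r ^ 2) + (28 * s - 4) * (x - r)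
                         + 14 - 20 * s - 2 * s ^ 2))
    by (unfold g_excess; ring).
  (* since [-1 <= x - r <= 0] and [28 s - 4 <= 3] *)
  assert (Hlin : -3 <= (28 * s - 4) * (x - r)) by nra.
  assert (0 < 8 * (x ^ 2 - x * r + r ^ 2) + (28 * s - 4) * (x - r)
              + 14 - 20 * s - 2 * s ^ 2) by nra.
  nra.
Qed.

Lemma g_excess_pos_left_large (x r : R) :
  - r <= x <= 0 -> 1 / 2 <= r -> 0 < g_excess x (r ^ 2).
Proof.
  intros [Hrx Hx0] Hr.
  assert (Hlead : 0 < r ^ 2 * (r ^ 4 - 13 * r ^ 2 + 51)).
  { apply Rmult_lt_0_compat; [nra |].
    pose proof (pow2_ge_0 (r ^ 2 - 13 / 2)); nra. }
  set (t := - x).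
  assert (Ht : 0 <= t <= r) by (unfold t; lra).
  assert (E : g_excess x (r ^ 2) =
              r ^ 2 * (r ^ 4 - 13 * r ^ 2 + 51)
              + t * (2 * (r ^ 2 - 1) * (r ^ 2 + 7))
              + t ^ 2 * (28 * r ^ 2 - 4) + 8 * t * (r ^ 2 - t ^ 2))
    by (unfold g_excess, t; ring).
  rewrite E.
  assert (0 <= t ^ 2 * (28 * r ^ 2 - 4))
    by (apply Rmult_le_pos; [apply pow2_ge_0 | nra]).
  assert (0 <= 8 * t * (r ^ 2 - t ^ 2))
    by (apply Rmult_le_pos; nra).
  destruct (Rle_lt_dec 1 r) as [H1|H1].
  - assert (0 <= t * (2 * (r ^ 2 - 1) * (r ^ 2 + 7)))
      by (apply Rmult_le_pos; [lra | apply Rmult_le_pos; nra]).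
    lra.
  - assert (Hcoef : 2 * (r ^ 2 - 1) * (r ^ 2 + 7) <= 0)
      by (assert (r ^ 2 <= 1) by nra; pose proof (pow2_ge_0 r); nra).
    assert (r * (2 * (r ^ 2 - 1) * (r ^ 2 + 7)) <= t * (2 * (r ^ 2 - 1) * (r ^ 2 + 7))).
    { assert (0 <= (r - t) * - (2 * (r ^ 2 - 1) * (r ^ 2 + 7)))
        by (apply Rmult_le_pos; lra).
      lra. }
    assert (0 < r ^ 2 * (r ^ 4 - 13 * r ^ 2 + 51) + r * (2 * (r ^ 2 - 1) * (r ^ 2 + 7))).
    { replace (r ^ 2 * (r ^ 4 - 13 * r ^ 2 + 51) + r * (2 * (r ^ 2 - 1) * (r ^ 2 + 7)))
        with (r * (r ^ 5 + 2 * r ^ 4 + 13 * r * (1 - r ^ 2) + 12 * r ^ 2 + 38 * r - 14))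
        by ring.
      assert (0 <= r ^ 5 + 2 * r ^ 4 + 13 * r * (1 - r ^ 2) + 12 * r ^ 2).
      { assert (0 <= r * (1 - r ^ 2)) by (apply Rmult_le_pos; nra).
        assert (0 <= r ^ 5) by (apply pow_le; lra).
        assert (0 <= r ^ 4) by (apply pow_le; lra).
        nra. }
      apply Rmult_lt_0_compat; lra. }
    lra.
Qed.

Lemma g_excess_pos_left (x r : R) :
  - r <= x <= 0 -> 275 / 1000 <= r -> 0 < g_excess x (r ^ 2).
Proof.
  intros Hx Hr.
  destruct (Rle_lt_dec (1 / 2) r) as [Hlarge|Hsmall].
  - exact (g_excess_pos_left_large x r Hx Hlarge).
  - apply Rlt_le_trans with (g_excess (- r) (r ^ 2)).
    + rewrite g_excess_neg_real.
      assert (0 < r ^ 3 + r ^ 2 + 7 * r - 2) by nra.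
      assert (0 < r * (r ^ 2 + r + 7)) by nra.
      nra.
    + apply g_excess_min_neg_real; lra.
Qed.

Lemma g_excess_pos_boundary (x : R) : 0 <= x -> 0 < g_excess x (121 / 16).
Proof.
  intros Hx.
  (* [(x - c)^2 (8 x + k)] with [c = 293/500] matches the cubic up to a linear
     remainder with positive coefficients. *)
  assert (0 <= (x - 293 / 500) ^ 2 * (8 * x + 831 / 4 + 16 * (293 / 500))).
  { apply Rmult_le_pos; [apply pow2_ge_0 | lra]. }
  unfold g_excess; nra.
Qed.

Lemma g_excess_increasing (x s1 s2 : R) :
  121 / 16 <= s1 <= s2 -> g_excess x s1 <= g_excess x s2.
Proof.
  intros [H1 H12].
  set (K := s2 ^ 2 + s2 * s1 + s1 ^ 2 - (13 + 2 * x) * (s2 + s1)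
            + 51 - 20 * x + 28 * x ^ 2).
  assert (E : g_excess x s2 - g_excess x s1 = (s2 - s1) * K)
    by (unfold g_excess, K; ring).
  assert (0 < K).
  { pose proof (pow2_ge_0 (x - (s2 + s1 + 10) / 28)).
    pose proof (pow2_ge_0 (s2 - s1)).
    unfold K; nra. }
  nra.
Qed.

Lemma g_excess_pos_right (x s : R) : 0 <= x -> 121 / 16 <= s -> 0 < g_excess x s.
Proof.
  intros Hx Hs.
  apply Rlt_le_trans with (g_excess x (121 / 16)).
  - exact (g_excess_pos_boundary x Hx).
  - apply g_excess_increasing; lra.
Qed.

Lemma g_excess_eq0 (z : C) :
  Cmod (g z) = 1 -> g_excess (Re z) (Cmod z ^ 2) = 0.
Proof.
  intros Hg.
  pose proof (Cmod_g_sqr z) as E.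
  rewrite Hg in E.
  lra.
Qed.

Theorem proposition3p7 :
  (forall z : C, setA z -> Disc0 (275 / 1000)%R z) /\
  (forall z : C, setB z -> Disc0 (275 / 100)%R z).
Proof.
  split; intros z [Hre Hg]; unfold Disc0;
    apply g_excess_eq0 in Hg;
    pose proof (Rle_trans _ _ _ (Rabs_maj2 (Re z)) (re_le_Cmod z)) as Hx;
    apply Rnot_le_lt; intros Hr.
  - assert (0 < g_excess (Re z) (Cmod z ^ 2)) by (apply g_excess_pos_left; lra).
    lra.
  - assert (0 < g_excess (Re z) (Cmod z ^ 2)) by (apply g_excess_pos_right; nra).
    lra.
Qed.
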